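(* Let $\Bbbk$ be an algebraically closed field of characteristic zero, $G$ a finite abelian group, $u\in G$ of order $2$, $V$ a finite-dimensional $\Bbbk G$-module with $u\cdot v=-v$ for all $v\in V$, and $\mathcal{A}=\mathcal{A}(V,u,G)$. Let $(T,\beta,\alpha,\psi)$ be a compatible datum and $g\in G$. Then there is an isomorphism of left $\mathcal{A}$-comodules $\mathcal{L}(T,\beta,\alpha,\psi)\,\Box_{\mathcal{A}}\,\Bbbk_g\simeq\Bbbk_{\alpha(g)}$.
   Context: $\mathcal{A}(V,u,G)=\wedge(V)\#\Bbbk G$ is generated by $V$ and $G$ with relations of $G$, $vw+wv=0$, $gv=(g\cdot v)g$, and $\Delta(v)=v\otimes1+u\otimes v$, $\Delta(g)=g\otimes g$, $\varepsilon(v)=0$, $\varepsilon(g)=1$, $S(v)=-uv$, $S(g)=g^{-1}$. A compatible datum $(T,\beta,\alpha,\psi)$ consists of a group automorphism $\alpha$ of $G$ with $\alpha(u)=u$, a linear automorphism $T$ of $V$ with $T(g\cdot v)=\alpha(g)\cdot T(v)$, a symmetric $G$-invariant bilinear form $\beta$ on $V$, and $\psi\in H^2(G,\Bbbk^\times)$ (represented by a normalized cocycle). The algebra $\mathcal{L}(T,\beta,\alpha,\psi)$ is generated by the elements $(T(v),v)$, $v\in V$ (depending linearly on $v$) and elements $e_{(\alpha(g),g)}$, $g\in G$, with relations $e_{(\alpha(g),g)}e_{(\alpha(h),h)}=\psi(g,h)e_{(\alpha(gh),gh)}$, $e_{(\alpha(g),g)}(T(v),v)=(T(g\cdot v),g\cdot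 v)e_{(\alpha(g),g)}$, $(T(v),v)(T(w),w)+(T(w),w)(T(v),v)=\beta(v,w)1$; it is an $\mathcal{A}$-bicomodule algebra via left coaction $\lambda(T(v),v)=T(v)\otimes1+u\otimes(T(v),v)$, $\lambda(e_{(\alpha(g),g)})=\alpha(g)\otimes e_{(\alpha(g),g)}$ and right coaction $\rho(T(v),v)=e_{(u,u)}\otimes v+(T(v),v)\otimes1$, $\rho(e_{(\alpha(g),g)})=e_{(\alpha(g),g)}\otimes g$. For $h\in G$, $\Bbbk_h$ is the one-dimensional left $\mathcal{A}$-comodule spanned by $w_h$ with coaction $w_h\mapsto h\otimes w_h$. For a bicomodule $L$ and left comodule $X$, $L\Box_{\mathcal{A}}X=\{\sum x_i\otimes y_i\in L\otimes X:\sum\rho(x_i)\otimes y_i=\sum x_i\otimes\lambda_X(y_i)\}$, a left $\mathcal{A}$-comodule via the left coaction of $L$. *)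

From HB Require Import structures.
From mathcomp Require Import all_boot all_order all_algebra all_fingroup falgebra.
Set Implicit Arguments. Unset Strict Implicit. Unset Printing Implicit Defensive.
Import GRing.Theory.
Local Open Scope ring_scope.

Definition is_linear (k : fieldType) (U W : lmodType k) (f : U -> W) : Prop :=
  forall (a : k) x y, f (a *: x + y) = a *: f x + f y.

Definition alg_hom (k : fieldType) (B C : algType k) (f : B -> C) : Prop :=
  [/\ is_linear f, f 1 = 1 & forall x y, f (x * y) = f x * f y].

Definition presents (k : fieldType) (V : vectType k) (gT : finGroupType)
    (R : forall B : algType k, (V -> B) -> (gT -> B) -> Prop)
    (L : algType k) (t : V -> L) (e : gT -> L) : Prop :=
  R L t e /\
  forall (B : algType k) (t' : V -> B) (e' : gT -> B), R B t' e' ->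
    (exists f : L -> B, [/\ alg_hom f, forall v, f (t v) = t' v
                                    & forall g, f (e g) = e' g]) /\
    (forall f1 f2 : L -> B, alg_hom f1 -> alg_hom f2 ->
       (forall v, f1 (t v) = f2 (t v)) -> (forall g, f1 (e g) = f2 (e g)) ->
       forall x, f1 x = f2 x).

(* Defining relations of A(V,u,G) = /\(V) # kG : generated by V (linearly)
   and G, relations of G, vw + wv = 0, g v = (g.v) g. *)
Definition A_rels (k : fieldType) (V : vectType k) (gT : finGroupType)
    (gact : gT -> 'End(V)) (B : algType k) (x : V -> B) (y : gT -> B) : Prop :=
  [/\ is_linear x, y 1%g = 1, (forall g h, y (g * h)%g = y g * y h),
      (forall v w, x v * x w + x w * x v = 0)
    & (forall g v, y g * x v = x (gact g v) * y g)].

(* Defining relations of L(T,beta,alpha,psi): t v stands for (T(v),v) and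
   e g for e_(alpha(g),g). *)
Definition L_rels (k : fieldType) (V : vectType k) (gT : finGroupType)
    (gact : gT -> 'End(V)) (beta : V -> V -> k) (psi : gT -> gT -> k)
    (B : algType k) (t : V -> B) (e : gT -> B) : Prop :=
  [/\ is_linear t, e 1%g = 1,
      (forall g h, e g * e h = psi g h *: e (g * h)%g),
      (forall g v, e g * t v = t (gact g v) * e g)
    & (forall v w, t v * t w + t w * t v = (beta v w)%:A)].

Definition compatible_datum (k : fieldType) (V : vectType k) (gT : finGroupType)
    (gact : gT -> 'End(V)) (u : gT)
    (T : 'End(V)) (beta : V -> V -> k) (alpha : gT -> gT) (psi : gT -> gT -> k) : Prop :=
  [/\
      [/\ (forall g h, alpha (g * h)%g = (alpha g * alpha h)%g), bijective alpha
        & alpha u = u],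
      (bijective (T : V -> V) /\ (forall g v, T (gact g v) = gact (alpha g) (T v))),
      [/\ forall a x y w, beta (a *: x + y) w = a * beta x w + beta y w,
          forall v w, beta v w = beta w v
        & forall g v w, beta (gact g v) (gact g w) = beta v w]
    &
      [/\ forall g h, psi g h != 0,
          forall g h l, psi g h * psi (g * h)%g l = psi h l * psi g (h * l)%g
        & forall g, psi 1%g g = 1 /\ psi g 1%g = 1]].

(* Tensor products X (x) A and A (x) X, for A finite dimensional, modelled
   as coordinate functions on the basis vbasis fullv of A with values in X. *)
Definition tens (k : fieldType) (X : lmodType k) (A : falgType k) : Type :=
  {ffun 'I_(\dim (fullv : {vspace A})) -> X}.

(* tpure x a  represents  x (x) a  in X (x) A  (resp.  a (x) x  in A (x) X). *)
Definition tpure (k : fieldType) (X : lmodType k) (A : falgType k) (x : X) (a : A)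
  : tens X A := [ffun i => coord (vbasis fullv) i a *: x].

(* product of the tensor product algebra: (x(x)a)(y(x)b) = xy (x) ab *)
Definition tmul (k : fieldType) (X : algType k) (A : falgType k) (F G : tens X A)
  : tens X A :=
  [ffun l => \sum_(i < \dim (fullv : {vspace A})) \sum_(j < \dim (fullv : {vspace A}))
      coord (vbasis fullv) l (tnth (vbasis fullv) i * tnth (vbasis fullv) j)
        *: (F i * G j)].

Definition coaction_alg (k : fieldType) (L : algType k) (A : falgType k)
    (c : L -> tens L A) : Prop :=
  [/\ is_linear c, c 1 = tpure 1 1 & forall x y, c (x * y) = tmul (c x) (c y)].

(* L []_A k_g is identified with {x in L | rho x = x (x) g} via x |-> x (x) w_g
   (k_g is one-dimensional), with left coaction lambda (x) id.
   An isomorphism of left A-comodules  k_h -> L []_A k_g  is a linear map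
   c |-> c *: x0 which is bijective onto the cotensor product and sends the
   coaction w_h |-> h (x) w_h to the coaction of the cotensor product. *)
Definition cotensor_k_iso (k : fieldType) (L : algType k) (A : falgType k)
    (rho lam : L -> tens L A) (gA hA : A) : Prop :=
  exists x0 : L,
    [/\ x0 != 0,
        rho x0 = tpure x0 gA,
        (forall x, rho x = tpure x gA -> exists c : k, x = c *: x0)
      & lam x0 = tpure x0 hA].

From HB Require Import structures.
From mathcomp Require Import all_boot all_order all_algebra all_fingroup falgebra.
From Stdlib Require Import ClassicalEpsilon.
Set Implicit Arguments. Unset Strict Implicit. Unset Printing Implicit Defensive.
Import GRing.Theory.
Local Open Scope ring_scope.

(* The element e g is a right coinvariant of weight g with lam (e g) = e g (x)
   alpha g, so the content is that every x with rho x = x (x) g is a multiple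
   of e g.  Composing rho with the representation of A on k (+) V, in which V
   maps the line k into V and G acts diagonally, gives a matrix-valued algebra
   map; its entries rho00 and der j satisfy
     der j (t v * y) = v_j e_u rho00 y + t v * der j y,
   kill every e h and lower word length, and all der j vanish on coinvariants.
   The Euler operator x |-> sum_j t(b_j) e_u der j x acts on words of length m
   as psi(u, u) m modulo shorter words, so in characteristic 0 a common zero of
   the der j spanned by words of length <= m is spanned by shorter ones.  Hence
   coinvariants lie in the span of the e h, and the regular representation of
   G extracts the e g component. *)

Section IsLinear.
Variables (k : fieldType) (U W : lmodType k) (f : U -> W).
Hypothesis f_lin : is_linear f.

Lemma is_linear0 : f 0 = 0.
Proof.
have := f_lin 1 0 0; rewrite !scale1r addr0 => f00.
by apply: (addrI (f 0)); rewrite addr0 -f00.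
Qed.

Lemma is_linearD x y : f (x + y) = f x + f y.
Proof. by have := f_lin 1 x y; rewrite !scale1r. Qed.

Lemma is_linearZ a x : f (a *: x) = a *: f x.
Proof. by have := f_lin a x 0; rewrite !addr0 is_linear0 addr0. Qed.

Lemma is_linearN x : f (- x) = - f x.
Proof. by rewrite -scaleN1r is_linearZ scaleN1r. Qed.

Lemma is_linear_sum (I : Type) (r : seq I) (P : pred I) (F : I -> U) :
  f (\sum_(i <- r | P i) F i) = \sum_(i <- r | P i) f (F i).
Proof.
elim: r => [|i r IH]; first by rewrite !big_nil is_linear0.
by rewrite !big_cons; case: (P i); rewrite ?is_linearD IH.
Qed.

End IsLinear.

Section TensorMatrixEntries.
Variables (k : fieldType) (L : algType k) (A : falgType k).
Local Notation nA := (\dim (fullv : {vspace A})).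
Local Notation bA i := (tnth (vbasis (fullv : {vspace A})) i).

(* The (i, j) entry of (id (x) phi) F, for a matrix representation phi of A. *)
Definition tens_mx m n (phi : A -> 'M[k]_(m, n)) i j (F : tens L A) : L :=
  \sum_(l < nA) phi (bA l) i j *: F l.

Lemma sum_coord_mxE m n (phi : A -> 'M[k]_(m, n)) i j a : is_linear phi ->
  \sum_(l < nA) coord (vbasis fullv) l a * phi (bA l) i j = phi a i j.
Proof.
move=> phi_lin; rewrite [in RHS](coord_vbasis (memvf a)) (is_linear_sum phi_lin).
by rewrite summxE; apply: eq_bigr => l _; rewrite (is_linearZ phi_lin) mxE (tnth_nth 0).
Qed.

Lemma tens_mx_tpure m n (phi : A -> 'M[k]_(m, n)) i j x a : is_linear phi ->
  tens_mx phi i j (tpure x a) = phi a i j *: x.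
Proof.
move=> phi_lin; rewrite /tens_mx; under eq_bigr do rewrite ffunE scalerA.
rewrite -scaler_suml -(sum_coord_mxE _ _ _ phi_lin).
by congr (_ *: _); apply: eq_bigr => l _; rewrite mulrC.
Qed.

Lemma tens_mx_is_linear m n (phi : A -> 'M[k]_(m, n)) i j :
  is_linear (tens_mx phi i j).
Proof.
move=> a F G; rewrite /tens_mx scaler_sumr -big_split /=.
by apply: eq_bigr => l _; rewrite !ffunE scalerDr !scalerA mulrC.
Qed.

Lemma tens_mx_tmul m (phi : A -> 'M[k]_m.+1) i j (F G : tens L A) :
  is_linear phi -> (forall x y, phi (x * y) = phi x * phi y) ->
  tens_mx phi i j (tmul F G) = \sum_c tens_mx phi i c F * tens_mx phi c j G.
Proof.
move=> phi_lin phiM; rewrite /tens_mx /tmul.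
transitivity (\sum_(a < nA) \sum_(b < nA) phi (bA a * bA b) i j *: (F a * G b)).
  under eq_bigr do rewrite ffunE scaler_sumr.
  rewrite exchange_big /=; apply: eq_bigr => a _.
  under eq_bigr do rewrite scaler_sumr.
  rewrite exchange_big /=; apply: eq_bigr => b _.
  under eq_bigr do rewrite scalerA.
  rewrite -scaler_suml -(sum_coord_mxE _ _ _ phi_lin).
  by congr (_ *: _); apply: eq_bigr => l _; rewrite mulrC.
symmetry; under eq_bigr do rewrite mulr_suml.
under eq_bigr do (under eq_bigr do rewrite mulr_sumr).
rewrite exchange_big /=; apply: eq_bigr => a _.
rewrite exchange_big /=; apply: eq_bigr => b _.
rewrite phiM mxE scaler_suml; apply: eq_bigr => c _.
by rewrite -scalerAl -scalerAr scalerA.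
Qed.

End TensorMatrixEntries.

Section SubalgebraOfPred.
Variables (k : fieldType) (L : algType k) (S : pred L).
Hypothesis S_closed : GRing.subsemialg_closed S.

Record subalg_of := SubalgOf { subalg_val : L; _ : S subalg_val }.
(* The [let] makes the type depend on [S_closed], so that the instance below
   can be keyed on it. *)
Definition subalg : Type := let _ := S_closed in subalg_of.
HB.instance Definition _ := [isSub of subalg for subalg_val].
HB.instance Definition _ := [Choice of subalg by <:].
HB.instance Definition _ :=
  GRing.SubChoice_isSubAlgebra.Build k L S subalg S_closed.

Lemma subalg_valZ (a : k) (x : subalg) : val (a *: x) = a *: val x.
Proof. exact: linearZ. Qed.

Lemma subalg_val_alg_hom : alg_hom (val : subalg -> L).
Proof.
split=> [a x y||x y]; last exact: rmorphM; last exact: rmorph1.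
by rewrite raddfD; congr (_ + _); apply: subalg_valZ.
Qed.

End SubalgebraOfPred.

Section PresentedInduction.
Variables (k : fieldType) (V : vectType k) (gT : finGroupType).
Variables (gact : gT -> 'End(V)) (beta : V -> V -> k) (psi : gT -> gT -> k).
Variables (L : algType k) (t : V -> L) (e : gT -> L).
Hypothesis L_pres : presents (L_rels gact beta psi) t e.

Lemma presented_ind (P : L -> Prop) :
  P 1 -> (forall x y, P x -> P y -> P (x + y)) ->
  (forall a x, P x -> P (a *: x)) -> (forall x y, P x -> P y -> P (x * y)) ->
  (forall v, P (t v)) -> (forall g, P (e g)) -> forall x, P x.
Proof.
move=> P1 PD PZ PM Pt Pe.
have P0 : P 0 by rewrite -(scale0r 1); apply: PZ.
pose S x := if excluded_middle_informative (P x) then true else false.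
have SP x : reflect (P x) (S x).
  by rewrite /S; case: excluded_middle_informative => ?; constructor.
have S_closed : GRing.subsemialg_closed S.
  split; first exact/SP.
  - by split=> [|x y /SP Px /SP Py]; apply/SP; [|apply: PD].
  - by move=> a x /SP Px; apply/SP; apply: PZ.
  - by move=> x y /SP Px /SP Py; apply/SP; apply: PM.
pose t' v : subalg S_closed := SubalgOf (introT (SP _) (Pt v)).
pose e' g : subalg S_closed := SubalgOf (introT (SP _) (Pe g)).
have [[t_lin e1 eM et tt] L_univ] := L_pres.
have [val_lin val1 valM] := subalg_val_alg_hom S_closed.
have rels' : L_rels gact beta psi t' e'.
  split=> [a v w||g h|g v|v w]; apply: val_inj.
  - by rewrite val_lin /= t_lin.
  - by rewrite val1 /= e1.
  - by rewrite valM subalg_valZ /= eM.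
  - by rewrite !valM /= et.
  - have valD (x y : subalg S_closed) : val (x + y) = val x + val y.
      by have := val_lin 1 x y; rewrite !scale1r.
    by rewrite valD !valM subalg_valZ val1 /= tt.
have [[f [[f_lin f1 fM] ft fe]] _] := L_univ _ _ _ rels'.
have [_ L_uniq] := L_univ _ _ _ (And5 t_lin e1 eM et tt).
have id_hom : alg_hom (fun x : L => x) by [].
have val_f_hom : alg_hom (fun x => val (f x)).
  by split=> [a x y||x y]; rewrite ?f_lin ?val_lin ?f1 ?val1 ?fM ?valM.
move=> x; have -> : x = val (f x).
  by apply: (L_uniq _ _ id_hom val_f_hom) => [v|g]; rewrite ?ft ?fe.
by case: (f x) => y /= /SP.
Qed.

End PresentedInduction.

Section ExtensionRepresentation.
Variables (k : fieldType) (V : vectType k) (gT : finGroupType).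
Variable gact : gT -> 'End(V).
Hypothesis gact1 : gact 1%g = \1%VF.
Hypothesis gactM : forall g h, gact (g * h)%g = (gact g \o gact h)%VF.
Local Notation n := (\dim (fullv : {vspace V})).
Local Notation bV := (vbasis (fullv : {vspace V})).

Definition coord_cV (v : V) : 'cV[k]_n := \col_i coord bV i v.
Definition act_mx (g : gT) : 'M[k]_n :=
  \matrix_(i, j) coord bV i (gact g (tnth bV j)).

Lemma coord_cV_is_linear : is_linear coord_cV.
Proof. by move=> a v w; apply/matrixP => i j; rewrite !mxE linearP. Qed.

Lemma act_mx_coord g v : act_mx g *m coord_cV v = coord_cV (gact g v).
Proof.
apply/matrixP => i j; rewrite !mxE [in RHS](coord_vbasis (memvf v)) !linear_sum.
by apply: eq_bigr => l _; rewrite !mxE !linearZ /= (tnth_nth 0) mulrC.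
Qed.

Lemma act_mxM g h : act_mx (g * h)%g = act_mx g *m act_mx h.
Proof.
apply/matrixP => i j.
have := congr1 (fun M : 'cV[k]_n => M i ord0) (act_mx_coord g (gact h (tnth bV j))).
rewrite [in RHS]mxE => act_gh.
rewrite [LHS]mxE gactM comp_lfunE -act_gh !mxE.
by apply: eq_bigr => l _; rewrite !mxE.
Qed.

Lemma act_mx1 : act_mx 1%g = 1%:M.
Proof.
apply/matrixP => i j; rewrite !mxE gact1 id_lfunE (tnth_nth 0).
by rewrite coord_free ?(basis_free (vbasisP _)) // eq_sym.
Qed.

Definition ext_mxV (v : V) : 'M[k]_(1 + n) := block_mx 0 0 (coord_cV v) 0.
Definition ext_mxG (g : gT) : 'M[k]_(1 + n) := block_mx 1%:M 0 0 (act_mx g).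

Lemma mulr_block (a a' : 'M[k]_1) (b b' : 'M[k]_(1, n)) (c c' : 'M[k]_(n, 1))
    (d d' : 'M[k]_n) :
  (block_mx a b c d : 'M[k]_(1 + n)) * block_mx a' b' c' d' =
  block_mx (a *m a' + b *m c') (a *m b' + b *m d')
           (c *m a' + d *m c') (c *m b' + d *m d').
Proof. exact: mulmx_block. Qed.

Lemma ext_mx_A_rels : A_rels gact ext_mxV ext_mxG.
Proof.
split.
- move=> a v w; rewrite /ext_mxV coord_cV_is_linear.
  rewrite (scale_block_mx a (0 : 'M_1) (0 : 'M_(1, n)) _ (0 : 'M_n)).
  by rewrite (@add_block_mx _ 1 n 1 n) !scaler0 !addr0.
- by rewrite /ext_mxG act_mx1 -scalar_mx_block.
- move=> g h; rewrite /ext_mxG act_mxM mulr_block.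
  by rewrite !mulmx0 !mul0mx !addr0 !add0r mul1mx.
- move=> v w; rewrite /ext_mxV !mulr_block !mulmx0 !mul0mx !addr0.
  by rewrite (@add_block_mx _ 1 n 1 n) !addr0 block_mx0.
- move=> g v; rewrite /ext_mxG /ext_mxV !mulr_block.
  by rewrite !mulmx0 !mul0mx !addr0 !add0r act_mx_coord mulmx1.
Qed.

End ExtensionRepresentation.

Section RegularRepresentation.
Variables (k : fieldType) (V : vectType k) (gT : finGroupType).
Variable gact : gT -> 'End(V).
Local Notation N := #|gT|.-1.

Lemma card_gT_predK : #|gT| = N.+1.
Proof. by rewrite prednK // (cardD1 1%g) inE. Qed.

Definition grp_of_ord (i : 'I_N.+1) : gT := enum_val (cast_ord (esym card_gT_predK) i).
Definition ord_of_grp (h : gT) : 'I_N.+1 := cast_ord card_gT_predK (enum_rank h).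

Lemma ord_of_grpK : cancel ord_of_grp grp_of_ord.
Proof. by move=> h; rewrite /grp_of_ord /ord_of_grp cast_ordK enum_rankK. Qed.

Lemma grp_of_ordK : cancel grp_of_ord ord_of_grp.
Proof. by move=> i; rewrite /grp_of_ord /ord_of_grp enum_valK cast_ordKV. Qed.

(* Indexed by 'I_N.+1 so that the matrices form a nontrivial ring. *)
Definition reg_mx (g : gT) : 'M[k]_N.+1 :=
  \matrix_(i, j) (grp_of_ord i == g * grp_of_ord j)%g%:R.

Lemma reg_mx_A_rels : A_rels gact (fun _ => 0) reg_mx.
Proof.
split=> [a v w||g h|v w|g v]; rewrite ?scaler0 ?mulr0 ?mul0r ?addr0 //.
  apply/matrixP => i j; rewrite !mxE mul1g.
  by rewrite (inj_eq (can_inj grp_of_ordK)).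
apply/matrixP => i j; rewrite [_ * _]/(_ *m _) !mxE.
rewrite (bigD1 (ord_of_grp (h * grp_of_ord j)%g)) //= big1 ?addr0.
  by rewrite !mxE ord_of_grpK eqxx mulr1 mulgA.
move=> c c_neq; rewrite !mxE.
have [c_eq|] := eqVneq (grp_of_ord c) (h * grp_of_ord j)%g; last by rewrite mulr0.
by move: c_neq; rewrite -c_eq grp_of_ordK eqxx.
Qed.

End RegularRepresentation.

Section Words.
Variables (k : fieldType) (V : vectType k) (gT : finGroupType).
Variables (gact : gT -> 'End(V)) (beta : V -> V -> k) (psi : gT -> gT -> k).
Variables (L : algType k) (t : V -> L) (e : gT -> L).
Hypothesis L_pres : presents (L_rels gact beta psi) t e.

Lemma t_is_linear : is_linear t. Proof. by case: L_pres => [[]]. Qed.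
Lemma e1 : e 1%g = 1. Proof. by case: L_pres => [[]]. Qed.
Lemma eM g h : e g * e h = psi g h *: e (g * h)%g. Proof. by case: L_pres => [[]]. Qed.
Lemma e_t g v : e g * t v = t (gact g v) * e g. Proof. by case: L_pres => [[]]. Qed.
Lemma t_anticomm v w : t v * t w + t w * t v = (beta v w)%:A.
Proof. by case: L_pres => [[]]. Qed.

Lemma sum_coord_t v : \sum_(j < \dim (fullv : {vspace V}))
  coord (vbasis fullv) j v *: t (tnth (vbasis fullv) j) = t v.
Proof.
rewrite [in RHS](coord_vbasis (memvf v)) (is_linear_sum t_is_linear).
by apply: eq_bigr => j _; rewrite (is_linearZ t_is_linear) (tnth_nth 0).
Qed.

Definition word (s : seq V) (h : gT) : L := foldr (fun v y => t v * y) 1 s * e h.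

Lemma word_nil h : word [::] h = e h. Proof. exact: mul1r. Qed.

Lemma word_cons v s h : word (v :: s) h = t v * word s h.
Proof. exact: esym (mulrA _ _ _). Qed.

Lemma wordM s h s' h' :
  word s h * word s' h' = psi h h' *: word (s ++ map (gact h) s') (h * h')%g.
Proof.
elim: s => [|v s IH]; last by rewrite !word_cons -mulrA IH -scalerAr.
rewrite word_nil /word /= scalerAr -eM mulrA [RHS]mulrA; congr (_ * _).
elim: s' => [|v s' IH] /=; first by rewrite mulr1 mul1r.
by rewrite mulrA e_t -!mulrA IH.
Qed.

Definition wspan m (x : L) := exists r : seq (k * (seq V * gT)),
  all (fun p => size p.2.1 <= m)%N r /\ x = \sum_(p <- r) p.1 *: word p.2.1 p.2.2.

Lemma wspan_word s h : wspan (size s) (word s h).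
Proof. by exists [:: (1, (s, h))]; rewrite /= leqnn big_seq1 scale1r. Qed.

Lemma wspan0 m : wspan m 0.
Proof. by exists [::]; rewrite big_nil. Qed.

Lemma wspanD m x y : wspan m x -> wspan m y -> wspan m (x + y).
Proof.
move=> [r [r_le ->]] [r' [r'_le ->]].
by exists (r ++ r'); rewrite all_cat r_le r'_le big_cat.
Qed.

Lemma wspanZ m a x : wspan m x -> wspan m (a *: x).
Proof.
move=> [r [r_le ->]]; exists [seq (a * p.1, p.2) | p <- r].
by rewrite all_map big_map scaler_sumr; split=> //; apply: eq_bigr => p _; rewrite scalerA.
Qed.

Lemma wspanN m x : wspan m x -> wspan m (- x).
Proof. by rewrite -scaleN1r; apply: wspanZ. Qed.

Lemma wspan_le m m' x : (m <= m')%N -> wspan m x -> wspan m' x.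
Proof.
move=> le_mm' [r [r_le ->]]; exists r; split=> //.
by apply: sub_all r_le => p /= /leq_trans; apply.
Qed.

Lemma wspan_sum m (I : eqType) (r : seq I) (F : I -> L) :
  (forall i, i \in r -> wspan m (F i)) -> wspan m (\sum_(i <- r) F i).
Proof.
elim: r => [|i r IH] wF; first by rewrite big_nil; apply: wspan0.
rewrite big_cons; apply: wspanD; first by apply: wF; rewrite mem_head.
by apply: IH => j j_r; apply: wF; rewrite in_cons j_r orbT.
Qed.

Lemma wspanM m m' x y : wspan m x -> wspan m' y -> wspan (m + m') (x * y).
Proof.
move=> [r [r_le ->]] [r' [r'_le ->]].
exists [seq (p.1 * q.1 * psi p.2.2 q.2.2,
             (p.2.1 ++ map (gact p.2.2) q.2.1, (p.2.2 * q.2.2)%g)) | p <- r, q <- r'].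
split.
  apply/allP => z /allpairsPdep [p [q [p_r q_r' ->]]] /=.
  by rewrite size_cat size_map leq_add // ?(allP r_le) ?(allP r'_le).
rewrite big_allpairs_dep mulr_suml; apply: eq_bigr => p _.
rewrite mulr_sumr; apply: eq_bigr => q _ /=.
by rewrite -scalerAl -scalerAr wordM !scalerA.
Qed.

Lemma wspan_t v : wspan 1 (t v).
Proof. by have := wspan_word [:: v] 1%g; rewrite word_cons word_nil e1 mulr1. Qed.

Lemma wspan_e g : wspan 0 (e g).
Proof. by have := wspan_word [::] g; rewrite word_nil. Qed.

Lemma wspan_exists x : exists m, wspan m x.
Proof.
apply: (presented_ind L_pres (P := fun x => exists m, wspan m x)).
- by exists 0%N; rewrite -e1; apply: wspan_e.
- move=> x1 x2 [m1 w1] [m2 w2]; exists (maxn m1 m2).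
  by apply: wspanD; [exact: wspan_le (leq_maxl m1 m2) w1 | exact: wspan_le (leq_maxr m1 m2) w2].
- by move=> a x1 [m1 w1]; exists m1; apply: wspanZ.
- by move=> x1 x2 [m1 w1] [m2 w2]; exists (m1 + m2)%N; apply: wspanM.
- by move=> v; exists 1%N; apply: wspan_t.
- by move=> g; exists 0%N; apply: wspan_e.
Qed.

End Words.

Section Coinvariants.
Variables (k : fieldType) (gT : finGroupType) (u : gT) (V : vectType k).
Variables (gact : gT -> 'End(V)) (beta : V -> V -> k) (psi : gT -> gT -> k).
Variables (A : falgType k) (iV : V -> A) (iG : gT -> A).
Variables (L : algType k) (t : V -> L) (e : gT -> L) (rho : L -> tens L A).
Hypothesis gact_u : forall v, gact u v = - v.
Hypothesis uu : (u * u = 1)%g.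
Hypothesis char0 : [pchar k] =i pred0.
Hypothesis psi_uu : psi u u != 0.
Hypothesis L_pres : presents (L_rels gact beta psi) t e.
Hypothesis rho_alg : coaction_alg rho.
Hypothesis rho_t : forall v, rho (t v) = tpure (e u) (iV v) + tpure (t v) 1.
Hypothesis rho_e : forall g, rho (e g) = tpure (e g) (iG g).
Local Notation n := (\dim (fullv : {vspace V})).
Local Notation bV := (vbasis (fullv : {vspace V})).
Local Notation wspan := (wspan t e).
Local Notation word := (word t e).

Section ExtensionCoaction.
Variable phi : A -> 'M[k]_(1 + n).
Hypothesis phi_lin : is_linear phi.
Hypothesis phi1 : phi 1 = 1.
Hypothesis phiM : forall x y, phi (x * y) = phi x * phi y.
Hypothesis phi_V : forall v, phi (iV v) = ext_mxV v.
Hypothesis phi_G : forall g, phi (iG g) = ext_mxG gact g.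

Local Notation i0 := (lshift n (ord0 : 'I_1)).
Local Notation rj j := (rshift 1 j).

Definition rho_mx i j x := tens_mx phi i j (rho x).

Lemma rho_mx_is_linear i j : is_linear (rho_mx i j).
Proof. by case: rho_alg => rho_lin _ _ a x y; rewrite /rho_mx rho_lin tens_mx_is_linear. Qed.

Lemma rho_mxM i j x y : rho_mx i j (x * y) = \sum_c rho_mx i c x * rho_mx c j y.
Proof. by case: rho_alg => _ _ rhoM; rewrite /rho_mx rhoM tens_mx_tmul. Qed.

Lemma rho_mx_t i j v :
  rho_mx i j (t v) = ext_mxV v i j *: e u + (1%:M : 'M_(1 + n)) i j *: t v.
Proof.
by rewrite /rho_mx rho_t (is_linearD (tens_mx_is_linear _ _ _)) !tens_mx_tpure ?phi_V ?phi1.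
Qed.

Lemma rho_mx_e i j h : rho_mx i j (e h) = ext_mxG gact h i j *: e h.
Proof. by rewrite /rho_mx rho_e tens_mx_tpure ?phi_G. Qed.

Definition rho00 x := rho_mx i0 i0 x.
Definition der j x := rho_mx (rj j) i0 x.

Lemma der_is_linear j : is_linear (der j).
Proof. exact: rho_mx_is_linear. Qed.

Lemma sum_ord1n (R : nmodType) (F : 'I_(1 + n) -> R) :
  \sum_c F c = F i0 + \sum_(j < n) F (rj j).
Proof. by rewrite big_split_ord big_ord1. Qed.

Lemma rho00_t v y : rho00 (t v * y) = t v * rho00 y.
Proof.
rewrite /rho00 rho_mxM sum_ord1n big1 ?addr0 => [|j _].
  by rewrite rho_mx_t /ext_mxV block_mxEul mxE scale0r add0r mxE eqxx scale1r.
rewrite rho_mx_t /ext_mxV block_mxEur mxE scale0r add0r mxE.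
by rewrite eq_lrshift scale0r mul0r.
Qed.

Lemma rho00_word s h : rho00 (word s h) = word s h.
Proof.
elim: s => [|v s IH]; last by rewrite word_cons rho00_t IH.
by rewrite word_nil /rho00 rho_mx_e /ext_mxG block_mxEul mxE eqxx scale1r.
Qed.

Lemma der_t j v y : der j (t v * y) = coord bV j v *: (e u * rho00 y) + t v * der j y.
Proof.
rewrite /der rho_mxM sum_ord1n; congr (_ + _).
  rewrite rho_mx_t /ext_mxV block_mxEdl !mxE eq_rlshift.
  by rewrite scale0r addr0 -scalerAl.
rewrite (bigD1 j) //= big1 ?addr0 => [|c c_neq].
  by rewrite rho_mx_t /ext_mxV block_mxEdr mxE scale0r add0r mxE eqxx scale1r.
rewrite rho_mx_t /ext_mxV block_mxEdr mxE scale0r add0r mxE.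
by rewrite eq_rshift eq_sym (negbTE c_neq) scale0r mul0r.
Qed.

Lemma der_e j h : der j (e h) = 0.
Proof. by rewrite /der rho_mx_e /ext_mxG block_mxEdl mxE scale0r. Qed.

Lemma der_word j s h : wspan (size s) (der j (word s h)).
Proof.
elim: s => [|v s IH]; first by rewrite word_nil der_e; apply: wspan0.
rewrite word_cons der_t rho00_word; apply: wspanD.
  apply: wspanZ; apply: (wspan_le _ (wspanM L_pres (wspan_e t e u) (wspan_word t e s h))).
  by rewrite add0n.
exact: (wspanM L_pres (wspan_t L_pres v) IH).
Qed.

Definition euler x := \sum_(j < n) t (tnth bV j) * (e u * der j x).

Lemma euler_is_linear : is_linear euler.
Proof.
move=> a x y; rewrite /euler scaler_sumr -big_split; apply: eq_bigr => j _ /=.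
by rewrite der_is_linear !mulrDr -!scalerAr.
Qed.

Lemma euler_eq0 x : (forall j, der j x = 0) -> euler x = 0.
Proof. by move=> der_x; rewrite /euler big1 // => j _; rewrite der_x !mulr0. Qed.

Lemma euler_t v y : euler (t v * y) =
  t v * (euler y + psi u u *: rho00 y) - \sum_(j < n) beta (tnth bV j) v *: (e u * der j y).
Proof.
have eu_eu z : e u * (e u * z) = psi u u *: z.
  by rewrite mulrA (eM L_pres) uu (e1 L_pres) -scalerAl mul1r.
have eu_t z : e u * (t v * z) = - (t v * (e u * z)).
  by rewrite mulrA (e_t L_pres) gact_u (is_linearN (t_is_linear L_pres)) !mulNr mulrA.
rewrite /euler; transitivity (\sum_(j < n)
    (coord bV j v *: t (tnth bV j) * (psi u u *: rho00 y)
     + (t v * (t (tnth bV j) * (e u * der j y)) - beta (tnth bV j) v *: (e u * der j y)))).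
  apply: eq_bigr => j _; rewrite der_t mulrDr mulrDr -scalerAr eu_eu.
  congr (_ + _); first by rewrite -scalerAr scalerAl.
  rewrite eu_t mulrN (mulrA (t (tnth bV j)) (t v)).
  have -> : t (tnth bV j) * t v = (beta (tnth bV j) v)%:A - t v * t (tnth bV j).
    by rewrite -(t_anticomm L_pres) addrK.
  by rewrite mulrBl mulr_algl opprB -mulrA.
rewrite big_split /= -mulr_suml (sum_coord_t L_pres) big_split /= -mulr_sumr sumrN.
by rewrite mulrDr addrA [_ + t v * (_ *: _)]addrC.
Qed.

Lemma euler_word s h :
  wspan (size s).-1 (euler (word s h) - (psi u u * (size s)%:R) *: word s h).
Proof.
elim: s => [|v s IH].
  rewrite mulr0 scale0r subr0 euler_eq0 => [|j]; last by rewrite word_nil der_e.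
  exact: wspan0.
rewrite word_cons euler_t rho00_word addrAC (scalerAr _ (t v)) -mulrBr.
rewrite mulrS (mulrDr (psi u u)) mulr1 scalerDl addrKA.
apply: wspanD; last first.
  apply/wspanN/wspan_sum => j _; apply: wspanZ.
  exact: (wspanM L_pres (wspan_e t e u) (der_word j s h)).
case: s IH => [|v' s] IH; last exact: (wspanM L_pres (wspan_t L_pres v) IH).
rewrite mulr0 scale0r subr0 euler_eq0 => [|j]; last by rewrite word_nil der_e.
by rewrite mulr0; apply: wspan0.
Qed.

Lemma euler_wspan m x :
  wspan m.+1 x -> wspan m (euler x - (psi u u * m.+1%:R) *: x).
Proof.
case=> r [r_le ->]; set c := psi u u * m.+1%:R.
rewrite (is_linear_sum euler_is_linear) scaler_sumr -sumrB.
apply: wspan_sum => -[a [s h]] /(allP r_le) /= s_le.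
rewrite (is_linearZ euler_is_linear) scalerA mulrC -scalerA -scalerBr; apply: wspanZ.
set d := psi u u * (size s)%:R.
rewrite -[c](subrK d) scalerDl opprD addrA addrAC; apply: wspanD.
  by apply: (wspan_le _ (euler_word s h)); case: (size s) s_le.
apply: wspanN; have [s_eq|s_neq] := eqVneq (size s) m.+1.
  by rewrite /d s_eq subrr scale0r; apply: wspan0.
apply: wspanZ; apply: (wspan_le _ (wspan_word t e s h)).
by rewrite -ltnS ltn_neqAle s_neq.
Qed.

Lemma der_ker_wspan0 m x : wspan m x -> (forall j, der j x = 0) -> wspan 0 x.
Proof.
elim: m x => [|m IH] x x_m der_x //; apply: (IH x _ der_x).
have c_neq0 : psi u u * m.+1%:R != 0.
  by rewrite mulf_neq0 //; move/(pcharf0P k): char0 => ->.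
rewrite -[x](scalerK c_neq0); apply: wspanZ.
by move/wspanN: (euler_wspan x_m); rewrite (euler_eq0 der_x) sub0r opprK.
Qed.

Lemma coinvariant_wspan0 g x : rho x = tpure x (iG g) -> wspan 0 x.
Proof.
move=> rho_x; have [m x_m] := wspan_exists L_pres x.
apply: (der_ker_wspan0 x_m) => j.
by rewrite /der /rho_mx rho_x tens_mx_tpure // phi_G /ext_mxG block_mxEdl mxE scale0r.
Qed.

End ExtensionCoaction.

Hypothesis A_pres : presents (A_rels gact) iV iG.
Hypothesis gact1 : gact 1%g = \1%VF.
Hypothesis gactM : forall g h, gact (g * h)%g = (gact g \o gact h)%VF.

Lemma coinvariant_scalar g x : rho x = tpure x (iG g) -> exists c : k, x = c *: e g.
Proof.
move=> rho_x; have [_ A_univ] := A_pres.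
have [[phi [[phi_lin phi1 phiM] phiV phiG]] _] := A_univ _ _ _ (ext_mx_A_rels gact1 gactM).
have [[reg [[reg_lin _ _] _ regG]] _] := A_univ _ _ _ (reg_mx_A_rels gact).
have [r [r_le x_r]] := coinvariant_wspan0 phi_lin phi1 phiM phiV phiG rho_x.
(* Entry (g, 1) of the regular representation is the indicator of g. *)
pose proj y := tens_mx reg (ord_of_grp g) (ord_of_grp 1%g) (rho y).
have proj_lin : is_linear proj.
  by case: rho_alg => rho_lin _ _ a y z; rewrite /proj rho_lin tens_mx_is_linear.
have proj_e h : proj (e h) = (g == h)%:R *: e h.
  by rewrite /proj rho_e tens_mx_tpure // regG mxE !ord_of_grpK mulg1.
exists (\sum_(p <- r) p.1 * (g == p.2.2)%:R).
have -> : x = proj x.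
  by rewrite /proj rho_x tens_mx_tpure // regG mxE !ord_of_grpK mulg1 eqxx scale1r.
rewrite x_r (is_linear_sum proj_lin) scaler_suml !big_seq.
apply: eq_bigr => -[a [s h]] /(allP r_le); case: s => //= _.
rewrite (is_linearZ proj_lin) word_nil proj_e scalerA.
by case: eqP => [->|_]; rewrite ?mulr1 ?mulr0 ?scale0r.
Qed.

End Coinvariants.

Unset Implicit Arguments.
Theorem lemma4p14
  (k : closedFieldType) (Hchar : [pchar k] =i pred0)
  (gT : finGroupType) (Hab : abelian [set: gT])
  (u : gT) (Hu : #[u]%g = 2%N)
  (V : vectType k) (gact : gT -> 'End(V))
  (Hact1 : gact 1%g = \1%VF)
  (HactM : forall g h, gact (g * h)%g = (gact g \o gact h)%VF)
  (Hactu : forall v, gact u v = - v)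
  (A : falgType k) (iV : V -> A) (iG : gT -> A)
  (HA : presents (A_rels gact) iV iG)
  (T : 'End(V)) (beta : V -> V -> k) (alpha : gT -> gT) (psi : gT -> gT -> k)
  (Hdatum : compatible_datum gact u T beta alpha psi)
  (L : algType k) (t : V -> L) (e : gT -> L)
  (HL : presents (L_rels gact beta psi) t e)
  (lam rho : L -> tens L A)
  (Hlam : coaction_alg lam) (Hrho : coaction_alg rho)
  (Hlam_t : forall v, lam (t v) = tpure 1 (iV (T v)) + tpure (t v) (iG u))
  (Hlam_e : forall g, lam (e g) = tpure (e g) (iG (alpha g)))
  (Hrho_t : forall v, rho (t v) = tpure (e u) (iV v) + tpure (t v) 1)
  (Hrho_e : forall g, rho (e g) = tpure (e g) (iG g))
  (g : gT) :
  cotensor_k_iso rho lam (iG g) (iG (alpha g)).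
Proof.
have [_ _ _ [psi_neq0 _ _]] := Hdatum.
have uu : (u * u = 1)%g by rewrite -(expg_order u) Hu expgS expg1.
exists (e g); split.
- apply: contra_neq (oner_neq0 L) => eg0.
  have := eM HL g g^-1; rewrite eg0 mul0r mulgV (e1 HL) => /esym/eqP.
  by rewrite scaler_eq0 (negbTE (psi_neq0 _ _)) => /eqP.
- exact: Hrho_e.
- exact: coinvariant_scalar Hactu uu Hchar (psi_neq0 u u) HL Hrho Hrho_t Hrho_e
    HA Hact1 HactM g.
- exact: Hlam_e.
Qed.
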